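(* Let $E$ and $F$ be finite cyclic groups. Then $g(OD(E\oplus F))=3$ if and only if at least one of the following holds: (a) $|E|$ is composite; (b) $|F|$ is composite; (c) $|E|$ and $|F|$ are distinct primes.
   Context: $E\oplus F$ denotes the external direct product of $E$ and $F$. For a finite group $G$, $o(x)$ denotes the order of $x\in G$. The order-divisor graph $OD(G)$ is the simple undirected graph with vertex set $G$, in which two distinct vertices $x,y$ are adjacent if and only if $o(x)\neq o(y)$ and either $o(x)\mid o(y)$ or $o(y)\mid o(x)$. The girth $g(\Gamma)$ of a graph $\Gamma$ is the length of a shortest cycle in $\Gamma$ (taken to be $0$ if $\Gamma$ has no cycle). *)

From mathcomp Require Import all_boot all_fingroup all_solvable.
Set Implicit Arguments. Unset Strict Implicit. Unset Printing Implicit Defensive.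

(* Simple graphs are given by a vertex set V : {set T} (T a finType) and a
   symmetric irreflexive adjacency relation e : rel T (restricted to V). *)

Definition has_cycle_of_length (T : finType) (V : {set T}) (e : rel T)
    (k : nat) : bool :=
  [exists t : k.-tuple T,
     [&& 3 <= k, all (fun x => x \in V) t, uniq t & path.cycle e t]].

(* Girth: the least length of a cycle, or 0 if there is no cycle.
   (A cycle has pairwise distinct vertices, so its length is <= #|T|.) *)
Definition girth (T : finType) (V : {set T}) (e : rel T) : nat :=
  head 0 [seq k <- iota 0 #|T|.+1 | has_cycle_of_length V e k].

Definition od_adj (gT : finGroupType) : rel gT :=
  fun x y => [&& x != y, #[x]%g != #[y]%g & (#[x]%g %| #[y]%g) || (#[y]%g %| #[x]%g)].

Definition OD_girth (gT : finGroupType) (G : {group gT}) : nat :=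
  girth G (@od_adj gT).

Definition composite (n : nat) : bool := (1 < n) && ~~ prime n.

From mathcomp Require Import all_boot all_fingroup all_solvable.
Set Implicit Arguments.
Unset Strict Implicit.
Unset Printing Implicit Defensive.

(* The girth of OD(G) is 3 exactly when OD(G) has a triangle.  Any three
   elements 1, y, z with 1 < #[y] < #[z] and #[y] %| #[z] form one; such
   elements exist in E (+) F when |E| is composite (take y of order a proper
   divisor of |E| and z a generator), and when |E| = p, |F| = q are distinct
   primes (orders p and lcm p q = pq).  Otherwise every element of E (+) F
   has order dividing lcm |E| |F|, which divides a prime p, so only the two
   orders 1 and p occur and no triangle exists. *)

Lemma girth_eq3 (T : finType) (V : {set T}) (e : rel T) :
  girth V e = 3 <-> has_cycle_of_length V e 3.
Proof.
split.
  rewrite /girth; case def_s: [seq k <- _ | _] => [|k s] //= <-.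
  have: k \in [seq k <- iota 0 #|T|.+1 | has_cycle_of_length V e k].
    by rewrite def_s mem_head.
  by rewrite mem_filter => /andP[].
move=> cyc3.
have cardT: 3 <= #|T|.
  case/existsP: cyc3 => t /and4P[_ _ uniq_t _].
  by have := max_card (mem (tval t)); rewrite (card_uniqP uniq_t) size_tuple.
have short_cycle k : k < 3 -> has_cycle_of_length V e k = false.
  by move=> lt_k3; apply/existsP => -[t /andP[]]; rewrite leqNgt lt_k3.
rewrite /girth -(subnK cardT) addnC -addSn iotaD filter_cat /=.
by rewrite cyc3 !short_cycle.
Qed.

Section OrderDivisorTriangles.
Variable gT : finGroupType.

Definition has_order_chain (A : {set gT}) : Prop :=
  exists y z, [/\ y \in A, z \in A, 1 < #[y]%g < #[z]%g & #[y]%g %| #[z]%g].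

Lemma od_triangle (G : {group gT}) :
  has_order_chain G -> has_cycle_of_length G (@od_adj gT) 3.
Proof.
case=> y [z [yG zG /andP[lt1y ltyz] dvd_yz]].
have lt1z := ltn_trans lt1y ltyz.
have neq_of_order (a b : gT) : #[a]%g < #[b]%g -> a != b.
  by apply: contraTneq => ->; rewrite ltnn.
have neq1 (a : gT) : 1 < #[a]%g -> 1%g != a.
  by rewrite -(order1 gT); apply: neq_of_order.
apply/existsP; exists [tuple 1%g; y; z].
rewrite /= group1 yG zG !inE negb_or /od_adj order1 !dvd1n !neq1 //.
by rewrite neq_of_order // dvd_yz [z == _]eq_sym neq1 // !neq_ltn lt1y lt1z ltyz
  !orbT.
Qed.

Lemma no_od_triangle (V : {set gT}) (p : nat) :
  prime p -> {in V, forall x, #[x]%g %| p} ->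
  ~ has_cycle_of_length V (@od_adj gT) 3.
Proof.
move=> /primeP[_ dvd_p] dvdV /existsP[[[|x [|y [|z [|? ?]]]] //= _]].
rewrite !andbT => /and5P[/and3P[xV yV zV] _].
rewrite /od_adj => /and3P[_ nxy _] /and3P[_ nyz _] /and3P[_ nzx _].
have {}dvdV (a : gT) : a \in V -> (#[a]%g == 1) || (#[a]%g == p).
  by move/dvdV/dvd_p.
move: nxy nyz nzx.
by case/orP: (dvdV x xV) => /eqP->; case/orP: (dvdV y yV) => /eqP->;
  case/orP: (dvdV z zV) => /eqP->; rewrite ?eqxx.
Qed.

Lemma cyclic_composite_order_chain (H : {group gT}) :
  cyclic H -> composite #|H| -> has_order_chain H.
Proof.
case/cyclicP=> g ->; rewrite -orderE => /andP[lt1g not_prime].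
set n := #[g]%g in lt1g not_prime *.
have p_pr := pdiv_prime lt1g; have dvd_pn := pdiv_dvd n.
have n_gt0 := ltnW lt1g; have p_gt0 := prime_gt0 p_pr.
exists (g ^+ (n %/ pdiv n))%g, g.
split; rewrite ?mem_cycle ?cycle_id ?orderXdvd //.
rewrite orderXdiv ?dvdn_div // divnA // mulKn // -/n prime_gt1 //=.
by rewrite ltn_neqAle dvdn_leq // andbT; apply: contraNneq not_prime => <-.
Qed.

End OrderDivisorTriangles.

Section DirectProduct.
Variables gT1 gT2 : finGroupType.

Lemma expg_pair (a : gT1) (b : gT2) k : ((a, b) ^+ k)%g = (a ^+ k, b ^+ k)%g.
Proof. by elim: k => // k IHk; rewrite !expgS IHk. Qed.

Lemma order_pair (a : gT1) (b : gT2) : #[(a, b)]%g = lcmn #[a]%g #[b]%g.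
Proof.
apply/eqP; rewrite eqn_dvd dvdn_lcm !order_dvdn.
have := expg_order (a, b); rewrite expg_pair => -[-> ->].
rewrite expg_pair !eqxx andbT -[1%g]/(1%g, 1%g)%g.
by rewrite xpair_eqE -!order_dvdn dvdn_lcml dvdn_lcmr.
Qed.

Lemma order_setX_dvd (E : {group gT1}) (F : {group gT2}) u :
  u \in setX E F -> #[u]%g %| lcmn #|E| #|F|.
Proof.
case: u => a b /[!inE] /andP[aE bF].
by rewrite order_pair dvdn_lcm (dvdn_trans (order_dvdG aE) (dvdn_lcml _ _))
  (dvdn_trans (order_dvdG bF) (dvdn_lcmr _ _)).
Qed.

End DirectProduct.

Section OrderChainsInProducts.
Variables (gT1 gT2 : finGroupType) (E : {group gT1}) (F : {group gT2}).

Lemma order_chain_setXl : has_order_chain E -> has_order_chain (setX E F).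
Proof.
case=> y [z [yE zE ltyz dvd_yz]]; exists (y, 1%g), (z, 1%g).
by rewrite !inE yE zE group1 !order_pair order1 !lcmn1.
Qed.

Lemma order_chain_setXr : has_order_chain F -> has_order_chain (setX E F).
Proof.
case=> y [z [yF zF ltyz dvd_yz]]; exists (1%g, y), (1%g, z).
by rewrite !inE yF zF group1 !order_pair order1 !lcm1n.
Qed.

Lemma order_chain_setX_primes :
  cyclic E -> cyclic F -> prime #|E| -> prime #|F| -> #|E| != #|F| ->
  has_order_chain (setX E F).
Proof.
case/cyclicP=> g ->; case/cyclicP=> h ->; rewrite -!orderE => pg ph neq_gh.
exists (g, 1%g), (g, h); rewrite !inE !cycle_id group1 !order_pair order1.
rewrite lcmn1 dvdn_lcml prime_gt1 //=; split=> //.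
rewrite ltn_neqAle dvdn_leq ?lcmn_gt0 ?order_gt0 ?dvdn_lcml // andbT.
apply: contra neq_gh => /eqP def_g.
by rewrite eq_sym -(dvdn_prime2 ph pg) [X in _ %| X]def_g dvdn_lcmr.
Qed.

End OrderChainsInProducts.

Lemma lcmn_dvd_prime m n :
  0 < m -> 0 < n -> ~~ composite m -> ~~ composite n ->
  ~~ [&& prime m, prime n & m != n] -> exists2 p, prime p & lcmn m n %| p.
Proof.
have one_or_prime k : 0 < k -> ~~ composite k -> (k == 1) || prime k.
  by case: k => [|[|k]] // _; rewrite /composite /= negbK.
move=> m_gt0 n_gt0 /(one_or_prime m m_gt0)/orP[/eqP-> | pm]
               /(one_or_prime n n_gt0)/orP[/eqP-> | pn].
- by exists 2.
- by exists n; rewrite ?lcm1n.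
- by exists m; rewrite ?lcmn1.
- by rewrite pm pn negbK => /eqP->; exists n; rewrite ?(lcmn_idPl (dvdnn n)).
Qed.

Theorem mainTheorem10 (gT1 gT2 : finGroupType)
    (E : {group gT1}) (F : {group gT2})
    (cycE : cyclic E) (cycF : cyclic F) :
  OD_girth (setX_group E F) = 3 <->
  [\/ composite #|E|, composite #|F|
    | [/\ prime #|E|, prime #|F| & #|E| != #|F|] ].
Proof.
rewrite /OD_girth; split=> [/girth_eq3 triangle | cases].
  have [cE | ncE] := boolP (composite #|E|); first by constructor 1.
  have [cF | ncF] := boolP (composite #|F|); first by constructor 2.
  have [pEF | npEF] := boolP [&& prime #|E|, prime #|F| & #|E| != #|F|].
    by case/and3P: pEF; constructor 3.
  have [p p_pr dvd_p] :=
    lcmn_dvd_prime (cardG_gt0 E) (cardG_gt0 F) ncE ncF npEF.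
  have dvd_orders : {in setX E F, forall u, #[u]%g %| p}.
    by move=> u /order_setX_dvd /dvdn_trans; apply.
  by case: (no_od_triangle p_pr dvd_orders triangle).
apply/girth_eq3/od_triangle; case: cases => [cE | cF | [pE pF neEF]].
- exact/order_chain_setXl/cyclic_composite_order_chain.
- exact/order_chain_setXr/cyclic_composite_order_chain.
- exact: order_chain_setX_primes.
Qed.
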